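(* For all natural numbers $m,n$, the polytope $\operatorname{Hom}(\Box_m,\triangle_n)$ has exactly $(n+1)(mn+1)$ vertices. Moreover, $\operatorname{Hom}(\Box_m,\triangle_n)$ is affinely isomorphic to the convex hull in $\mathbb{R}^{n+nm}$ of the points $$0,\quad 2e_i,\quad e_i+e_{ik},\quad e_i-e_{ik},\quad (e_i+e_j)+(e_{ik}-e_{jk})\ \ (i\ne j),$$ where $i,j$ range over $\{1,\ldots,n\}$ and $k$ over $\{1,\ldots,m\}$, and these points are exactly its vertices.
   Context: For convex polytopes $P,Q$, $\operatorname{Hom}(P,Q)$ is the set of maps $P\to Q$ that are restrictions of affine maps $\operatorname{Aff}(P)\to\operatorname{Aff}(Q)$; it is a convex polytope in the affine space of affine maps $\operatorname{Aff}(P)\to\operatorname{Aff}(Q)$. $\triangle_n=\operatorname{conv}(0,e_1,\ldots,e_n)\subset\mathbb{R}^n$, $\Box_m=\operatorname{conv}\{(a_1,\ldots,a_m):a_i=\pm1\}\subset\mathbb{R}^m$. In $\mathbb{R}^{n+nm}$ the standard basis vectors are indexed by single indices $i\in\{1,\ldots,n\}$ (denoted $e_i$) and double indices $(i,k)$ with $i\in\{1,\ldots,n\}$, $k\in\{1,\ldots,m\}$ (denoted $e_{ik}$). *)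

From HB Require Import structures.
From mathcomp Require Import all_boot all_order all_algebra.
From mathcomp Require Import reals.
Set Implicit Arguments. Unset Strict Implicit. Unset Printing Implicit Defensive.
Import Order.TTheory GRing.Theory Num.Theory.
Local Open Scope ring_scope.

Section Defs.
Variable R : realType.

Definition hull (V : lmodType R) (s : seq V) : V -> Prop :=
  fun x => exists w : 'I_(size s) -> R,
    (forall i, 0 <= w i) /\ \sum_i w i = 1 /\ x = \sum_i w i *: s`_i.

Definition is_vertex (V : lmodType R) (S : V -> Prop) (v : V) : Prop :=
  S v /\ forall x y (t : R), S x -> S y -> 0 < t < 1 ->
    v = t *: x + (1 - t) *: y -> x = v /\ y = v.

Definition affine_map (V W : lmodType R) (phi : V -> W) : Prop :=
  forall x y (t : R), phi (t *: x + (1 - t) *: y) = t *: phi x + (1 - t) *: phi y.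

Definition cube_pts (m : nat) : seq 'cV[R]_m :=
  [seq \col_k (if (f : {ffun 'I_m -> bool}) k then 1 else -1) | f <- enum {ffun 'I_m -> bool}].
Definition cube (m : nat) : 'cV[R]_m -> Prop := hull (cube_pts m).

Definition simplex_pts (n : nat) : seq 'cV[R]_n :=
  0 :: [seq delta_mx i 0 | i <- enum 'I_n].
Definition simplex (n : nat) : 'cV[R]_n -> Prop := hull (simplex_pts n).

(* An affine map R^m -> R^n is x |-> b + A x, encoded by the pair (b, A);
   this identifies the space of affine maps with R^n x R^(n x m). *)
Definition affmap (m n : nat) := ('cV[R]_n * 'M[R]_(n, m))%type.
Definition aff_eval (m n : nat) (f : affmap m n) (x : 'cV[R]_m) : 'cV[R]_n :=
  f.1 + f.2 *m x.

Definition HomBS (m n : nat) : affmap m n -> Prop :=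
  fun f => forall x, cube x -> simplex (aff_eval f x).

(* R^(n + nm): the first n coordinates are indexed by i, the last n*m by
   the double index (i,k) via mxvec_index i k *)
Definition coordspace (n m : nat) := 'cV[R]_(n + n * m).
Definition e1 (n m : nat) (i : 'I_n) : coordspace n m :=
  delta_mx (lshift (n * m) i) 0.
Definition e2 (n m : nat) (i : 'I_n) (k : 'I_m) : coordspace n m :=
  delta_mx (rshift n (mxvec_index i k)) 0.

Definition hom_pts (n m : nat) : seq (coordspace n m) :=
  0 :: [seq 2%:R *: e1 m i | i <- enum 'I_n]
    ++ [seq e1 m i + e2 i k | i <- enum 'I_n, k <- enum 'I_m]
    ++ [seq e1 m i - e2 i k | i <- enum 'I_n, k <- enum 'I_m]
    ++ flatten [seq [seq (e1 m i + e1 m j) + (e2 i k - e2 j k)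
                      | j <- [seq j <- enum 'I_n | j != i], k <- enum 'I_m]
               | i <- enum 'I_n].
End Defs.

From HB Require Import structures.
From mathcomp Require Import all_boot all_order all_algebra.
From mathcomp Require Import reals.
From mathcomp Require Import ring lra zify.
Set Implicit Arguments. Unset Strict Implicit. Unset Printing Implicit Defensive.
Import Order.TTheory GRing.Theory Num.Theory.
Local Open Scope ring_scope.

(* A map x |-> b + A x sends the cube into the simplex iff it does so on the sign vectors,
   i.e. iff sum_k |A_jk| <= b_j for all j and sum_j b_j + sum_k |sum_j A_jk| <= 1.  After
   scaling by 2, each listed point satisfies these inequalities and is the unique maximizer over
   the list of a suitable linear functional, hence a vertex of the hull.  Conversely a point
   satisfying them is decomposed column by column: in column k the positive parts of the entries
   are matched proportionally against the negative parts, giving the points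
   e_i + e_j + e_ik - e_jk; the unmatched parts go to e_i +- e_ik, the slack of row j to 2 e_j
   and the remaining mass to 0. *)

Section ConvexHull.
Variables (R : realType) (V : lmodType R).
Implicit Types (s : seq V) (x v : V).

Definition cone_comb s x (mu : R) := exists w : 'I_(size s) -> R,
  (forall i, 0 <= w i) /\ \sum_i w i = mu /\ x = \sum_i w i *: s`_i.

Lemma cone_comb0 s : cone_comb s 0 0.
Proof.
exists (fun=> 0); split=> //; split; first by rewrite big1.
by rewrite big1 // => i _; rewrite scale0r.
Qed.

Lemma cone_combD s x y a b :
  cone_comb s x a -> cone_comb s y b -> cone_comb s (x + y) (a + b).
Proof.
move=> [w [w0 [<- ->]]] [w' [w'0 [<- ->]]].
exists (fun i => w i + w' i); split; first by move=> i; rewrite addr_ge0.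
split; first by rewrite big_split.
by rewrite -big_split; apply: eq_bigr => i _; rewrite scalerDl.
Qed.

Lemma cone_comb_mem s p a : p \in s -> 0 <= a -> cone_comb s (a *: p) a.
Proof.
move=> ps a0; have ip : (index p s < size s)%N by rewrite index_mem.
pose i0 := Ordinal ip; pose w i := if i == i0 then a else 0.
exists w; split; first by move=> i; rewrite /w; case: ifP.
split; first by rewrite (bigD1 i0) //= /w eqxx big1 ?addr0 // => i /negbTE ->.
rewrite (bigD1 i0) //= /w eqxx big1 ?addr0 ?nth_index // => i /negbTE ->.
exact: scale0r.
Qed.

Lemma cone_comb_sum s (I : Type) (r : seq I) (P : pred I) (F : I -> V) (G : I -> R) :
  (forall i, P i -> cone_comb s (F i) (G i)) ->
  cone_comb s (\sum_(i <- r | P i) F i) (\sum_(i <- r | P i) G i).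
Proof.
move=> FG; apply: (big_ind2 (cone_comb s)) => //; first exact: cone_comb0.
by move=> *; apply: cone_combD.
Qed.

Lemma hull_mem s p : p \in s -> hull s p.
Proof. by move=> ps; rewrite -[p]scale1r; apply: cone_comb_mem. Qed.

(* The missing mass goes to the point 0. *)
Lemma hull_cone_comb s x mu : 0 \in s -> mu <= 1 -> cone_comb s x mu -> hull s x.
Proof.
move=> s0 mu1 /cone_combD /(_ (cone_comb_mem s0 (_ : 0 <= 1 - mu))).
by rewrite scaler0 addr0 subrKC; apply; rewrite subr_ge0.
Qed.

Lemma hull_split s (w : 'I_(size s) -> R) p :
  (forall i, 0 <= w i) -> \sum_i w i = 1 -> w p < 1 ->
  exists2 y, hull s y & \sum_i w i *: s`_i = w p *: s`_p + (1 - w p) *: y.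
Proof.
move=> w0 ws wp1; have d0 : 1 - w p != 0 by rewrite subr_eq0 gt_eqF.
have rest : \sum_(i | i != p) w i = 1 - w p.
  by rewrite -ws [in RHS](bigD1 p) //= [RHS]addrC addKr.
pose w' i := if i == p then 0 else w i / (1 - w p).
exists (\sum_i w' i *: s`_i).
  exists w'; split.
    by move=> i; rewrite /w'; case: ifP => // _; rewrite divr_ge0 // subr_ge0 ltW.
  split=> //; rewrite (bigD1 p) //= /w' eqxx add0r.
  rewrite (eq_bigr (fun i => w i / (1 - w p))) => [|i /negbTE -> //].
  by rewrite -mulr_suml rest divff.
rewrite (bigD1 p) //= [in RHS](bigD1 p) //= /w' eqxx scale0r add0r scaler_sumr.
congr (_ + _); apply: eq_bigr => i /negbTE ->.
by rewrite scalerA mulrC -mulrA mulVf ?mulr1.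
Qed.

Lemma hull_vertex_mem s v : is_vertex (hull s) v -> v \in s.
Proof.
move=> [[w [w0 [ws vE]]] ext].
have [p wp0] : exists p, 0 < w p.
  apply/existsP; apply: contraT; rewrite negb_exists => /forallP w_le0.
  have : \sum_i w i <= 0 by apply: sumr_le0 => i _; rewrite leNgt w_le0.
  by rewrite ws ler10.
have sp : s`_p \in s by rewrite mem_nth.
have [wp_eq1 | wp_neq1] := eqVneq (w p) 1.
  have others0 : \sum_(i | i != p) w i = 0 by have := ws; rewrite (bigD1 p) //= wp_eq1; lra.
  rewrite vE (bigD1 p) //= wp_eq1 scale1r big1 ?addr0 // => i ip.
  have /eqP := others0; rewrite psumr_eq0 // => /allP /(_ i (mem_index_enum i)).
  by rewrite ip => /eqP ->; rewrite scale0r.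
have wp1 : w p < 1.
  have : 0 <= \sum_(i | i != p) w i by apply: sumr_ge0.
  by move: ws; rewrite lt_neqAle wp_neq1 (bigD1 p) //=; lra.
have [y hy vE'] := hull_split w0 ws wp1.
by have [<- _] := ext _ _ _ (hull_mem sp) hy (introT andP (conj wp0 wp1)) (etrans vE vE').
Qed.

Section LinearFunctional.
Variable l : V -> R.
Hypothesis l_linear : forall a x y, l (a *: x + y) = a * l x + l y.

Lemma functional0 : l 0 = 0.
Proof. by have := l_linear 1 0 0; rewrite scaler0 addr0 mul1r; lra. Qed.

Lemma functionalZ a x : l (a *: x) = a * l x.
Proof. by rewrite -[a *: x]addr0 l_linear functional0 addr0. Qed.

Lemma functionalD x y : l (x + y) = l x + l y.
Proof. by rewrite -[x]scale1r l_linear mul1r scale1r. Qed.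

Lemma functionalN x : l (- x) = - l x.
Proof. by rewrite -scaleN1r functionalZ mulN1r. Qed.

Lemma functional_comb s (w : 'I_(size s) -> R) :
  l (\sum_i w i *: s`_i) = \sum_i w i * l s`_i.
Proof.
apply: (big_ind2 (fun x y => l x = y)); first exact: functional0.
  by move=> x1 x2 y1 y2 <- <-; rewrite functionalD.
by move=> i _; rewrite functionalZ.
Qed.

Lemma hull_functional_max s v :
  (forall p, p \in s -> p != v -> l p < l v) ->
  forall x, hull s x -> l x <= l v /\ (l x = l v -> x = v).
Proof.
move=> lt_v x [w [w0 [ws ->]]]; rewrite functional_comb.
have gap i : 0 <= w i * (l v - l s`_i).
  have [-> | ne] := eqVneq s`_i v; first by rewrite subrr mulr0.
  by rewrite mulr_ge0 // subr_ge0 ltW // lt_v ?mem_nth.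
have gapE : \sum_i w i * (l v - l s`_i) = l v - \sum_i w i * l s`_i.
  by under eq_bigr do rewrite mulrBr; rewrite sumrB -mulr_suml ws mul1r.
split=> [|eq_lv].
  by rewrite -subr_ge0 -gapE sumr_ge0.
have /eqP := gapE; rewrite eq_lv subrr psumr_eq0 // => /allP gap0.
rewrite -[v]scale1r -ws scaler_suml; apply: eq_bigr => i _.
have [-> // | ne] := eqVneq s`_i v.
move: (gap0 i (mem_index_enum i)) => /=; rewrite mulf_eq0 subr_eq0.
by rewrite (gt_eqF (lt_v _ (mem_nth 0 (ltn_ord i)) ne)) orbF => /eqP ->; rewrite !scale0r.
Qed.

Lemma strict_max_vertex s v :
  v \in s -> (forall p, p \in s -> p != v -> l p < l v) -> is_vertex (hull s) v.
Proof.
move=> vs lt_v; split; first exact: hull_mem.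
move=> x y t hx hy /andP[t0 t1] vE.
have [lx ex] := hull_functional_max lt_v hx.
have [ly ey] := hull_functional_max lt_v hy.
have : l v = t * l x + (1 - t) * l y by rewrite {1}vE l_linear functionalZ.
by split; [apply: ex | apply: ey]; nra.
Qed.

End LinearFunctional.
End ConvexHull.

Section AffineImage.
Variables (R : realType) (V W : lmodType R).
Variables (phi : V -> W) (psi : W -> V) (S : V -> Prop) (T : W -> Prop).
Hypotheses (phi_affine : affine_map phi) (phiK : cancel phi psi) (psiK : cancel psi phi).
Hypothesis T_image : forall w, T w <-> exists f, S f /\ phi f = w.

Lemma affine_image_mem f : T (phi f) <-> S f.
Proof.
split=> [/T_image [g [Sg /(can_inj phiK) <-]] // | Sf].
by apply/T_image; exists f.
Qed.

Lemma affine_inverse : affine_map psi.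
Proof. by move=> x y t; apply: (can_inj phiK); rewrite phi_affine !psiK. Qed.

Lemma affine_image_vertex f : is_vertex T (phi f) <-> is_vertex S f.
Proof.
split=> -[Tf ext]; split; try exact/affine_image_mem.
  move=> x y t Sx Sy t01 fE.
  have phifE : phi f = t *: phi x + (1 - t) *: phi y by rewrite fE phi_affine.
  have [ex ey] := ext _ _ _ (proj2 (affine_image_mem x) Sx) (proj2 (affine_image_mem y) Sy)
    t01 phifE.
  by split; apply: (can_inj phiK).
move=> x y t Tx Ty t01 fE.
have Spsi w : T w -> S (psi w) by rewrite -affine_image_mem psiK.
have fE' : f = t *: psi x + (1 - t) *: psi y by rewrite -affine_inverse -fE phiK.
have [ex ey] := ext _ _ _ (Spsi _ Tx) (Spsi _ Ty) t01 fE'.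
by split; [rewrite -ex | rewrite -ey]; rewrite psiK.
Qed.

End AffineImage.

Lemma mxvec_index_eq (n m : nat) (i j : 'I_n) (k l : 'I_m) :
  (mxvec_index i k == mxvec_index j l) = (i == j) && (k == l).
Proof.
by apply/eqP/andP => [/cast_ord_inj/enum_rank_inj [-> ->] | [/eqP-> /eqP->]].
Qed.

Section Coordinates.
Variables (R : realType) (n m : nat).
Local Notation CS := (coordspace R n m).
Implicit Types (x y w : CS).

Definition coord1 (j : 'I_n) w : R := w (lshift (n * m) j) 0.
Definition coord2 (j : 'I_n) (k : 'I_m) w : R := w (rshift n (mxvec_index j k)) 0.

Lemma coordP x y :
  (forall j, coord1 j x = coord1 j y) -> (forall j k, coord2 j k x = coord2 j k y) -> x = y.
Proof.
move=> eq1 eq2; apply/matrixP => r c; rewrite (ord1 c) -(splitK r).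
case: (split r) => [j | q] /=; first exact: eq1.
by case/mxvec_indexP: q => j k; apply: eq2.
Qed.

Lemma coord10 j : coord1 j 0 = 0. Proof. exact: mxE. Qed.
Lemma coord1D j x y : coord1 j (x + y) = coord1 j x + coord1 j y. Proof. exact: mxE. Qed.
Lemma coord1N j x : coord1 j (- x) = - coord1 j x. Proof. exact: mxE. Qed.
Lemma coord1Z j a x : coord1 j (a *: x) = a * coord1 j x. Proof. exact: mxE. Qed.
Lemma coord1_sum j I (r : seq I) (P : pred I) (F : I -> CS) :
  coord1 j (\sum_(i <- r | P i) F i) = \sum_(i <- r | P i) coord1 j (F i).
Proof. exact: summxE. Qed.
Lemma coord1_e1 j i : coord1 j (e1 R m i) = (j == i)%:R.
Proof. by rewrite /coord1 mxE eq_shift andbT. Qed.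
Lemma coord1_e2 j i k : coord1 j (e2 R i k) = 0.
Proof. by rewrite /coord1 mxE eq_shift. Qed.

Lemma coord20 j k : coord2 j k 0 = 0. Proof. exact: mxE. Qed.
Lemma coord2D j k x y : coord2 j k (x + y) = coord2 j k x + coord2 j k y. Proof. exact: mxE. Qed.
Lemma coord2N j k x : coord2 j k (- x) = - coord2 j k x. Proof. exact: mxE. Qed.
Lemma coord2Z j k a x : coord2 j k (a *: x) = a * coord2 j k x. Proof. exact: mxE. Qed.
Lemma coord2_sum j k I (r : seq I) (P : pred I) (F : I -> CS) :
  coord2 j k (\sum_(i <- r | P i) F i) = \sum_(i <- r | P i) coord2 j k (F i).
Proof. exact: summxE. Qed.
Lemma coord2_e1 j k i : coord2 j k (e1 R m i) = 0.
Proof. by rewrite /coord2 mxE eq_shift. Qed.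
Lemma coord2_e2 j k i l : coord2 j k (e2 R i l) = ((j == i) && (k == l))%:R.
Proof. by rewrite /coord2 mxE eq_shift mxvec_index_eq andbT. Qed.

Definition coordE := (coord10, coord1D, coord1N, coord1Z, coord1_sum, coord1_e1, coord1_e2,
  coord20, coord2D, coord2N, coord2Z, coord2_sum, coord2_e1, coord2_e2).

End Coordinates.

Section Kronecker.
Variables (R : pzRingType) (p : nat).
Implicit Types (F : 'I_p -> R) (l : 'I_p).

Lemma sum_kron F l : \sum_i F i * (i == l)%:R = F l.
Proof.
rewrite (bigD1 l) //= eqxx mulr1 big1 ?addr0 // => i /negbTE ->.
exact: mulr0.
Qed.

Lemma sum_kron_sym F l : \sum_i F i * (l == i)%:R = F l.
Proof. by under eq_bigr do rewrite eq_sym; exact: sum_kron. Qed.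

Lemma sum_delta l : \sum_i (i == l)%:R = 1 :> R.
Proof. by rewrite (bigD1 l) //= eqxx big1 ?addr0 // => i /negbTE ->. Qed.

Lemma sum2_kron_add (F : 'I_p -> 'I_p -> R) l :
  \sum_i \sum_j F i j * ((l == i)%:R + (l == j)%:R) = \sum_j F l j + \sum_i F i l.
Proof.
under eq_bigr do under eq_bigr do rewrite mulrDr.
under eq_bigr do rewrite big_split /= -mulr_suml.
by rewrite big_split /= sum_kron_sym; under [X in _ + X]eq_bigr do rewrite sum_kron_sym.
Qed.

Lemma sum2_kron_sub (F : 'I_p -> 'I_p -> R) l :
  \sum_i \sum_j F i j * ((l == i)%:R - (l == j)%:R) = \sum_j F l j - \sum_i F i l.
Proof.
under eq_bigr do under eq_bigr do rewrite mulrBr.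
under eq_bigr do rewrite sumrB /= -mulr_suml.
by rewrite sumrB /= sum_kron_sym; under [X in _ - X]eq_bigr do rewrite sum_kron_sym.
Qed.

End Kronecker.

Lemma flatten_map_uniq (S T : eqType) (s : seq S) (t : S -> seq T) :
  uniq s -> (forall x, x \in s -> uniq (t x)) ->
  (forall x y z, x \in s -> y \in s -> z \in t x -> z \in t y -> x = y) ->
  uniq (flatten [seq t x | x <- s]).
Proof.
elim: s => //= x s IH /andP[xs us] ut disj.
rewrite cat_uniq ut ?mem_head // IH //; first last.
- by move=> y y' z ys ys'; apply: disj; rewrite inE ?ys ?ys' orbT.
- by move=> y ys; apply: ut; rewrite inE ys orbT.
rewrite andbT; apply/hasPn => z /flatten_mapP[y ys zy]; apply/negP => zx.
by move: xs; rewrite (disj x y z (mem_head _ _) _ zx zy) ?ys // inE ys orbT.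
Qed.

Section Labels.
Variables (R : realType) (n m : nat).
Local Notation CS := (coordspace R n m).
Local Notation e1 := (e1 R m).
Local Notation e2 := (@e2 R n m).
Local Notation coord1 := (@coord1 R n m).
Local Notation coord2 := (@coord2 R n m).

Inductive hom_label :=
  | LZero | LTwo of 'I_n | LPlus of 'I_n & 'I_m | LMinus of 'I_n & 'I_m
  | LCross of 'I_n & 'I_n & 'I_m.

(* [LCross i i k] would duplicate [LTwo i]. *)
Definition label_ok (l : hom_label) : bool := if l is LCross i j _ then i != j else true.

Definition label_pt (l : hom_label) : CS :=
  match l with
  | LZero => 0
  | LTwo i => 2%:R *: e1 i
  | LPlus i k => e1 i + e2 i k
  | LMinus i k => e1 i - e2 i k
  | LCross i j k => (e1 i + e1 j) + (e2 i k - e2 j k)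
  end.

Lemma coord1_two l i : coord1 l (label_pt (LTwo i)) = 2 * (l == i)%:R.
Proof. by rewrite /= !coordE. Qed.
Lemma coord2_two l k i : coord2 l k (label_pt (LTwo i)) = 0.
Proof. by rewrite /= !coordE mulr0. Qed.
Lemma coord1_plus l i k : coord1 l (label_pt (LPlus i k)) = (l == i)%:R.
Proof. by rewrite /= !coordE addr0. Qed.
Lemma coord2_plus l k' i k : coord2 l k' (label_pt (LPlus i k)) = (k' == k)%:R * (l == i)%:R.
Proof. by rewrite /= !coordE add0r -natrM mulnb andbC. Qed.
Lemma coord1_minus l i k : coord1 l (label_pt (LMinus i k)) = (l == i)%:R.
Proof. by rewrite /= !coordE oppr0 addr0. Qed.
Lemma coord2_minus l k' i k : coord2 l k' (label_pt (LMinus i k)) = - ((k' == k)%:R * (l == i)%:R).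
Proof. by rewrite /= !coordE add0r -natrM mulnb andbC. Qed.
Lemma coord1_cross l i j k : coord1 l (label_pt (LCross i j k)) = (l == i)%:R + (l == j)%:R.
Proof. by rewrite /= !coordE oppr0 !addr0. Qed.
Lemma coord2_cross l k' i j k :
  coord2 l k' (label_pt (LCross i j k)) = (k' == k)%:R * ((l == i)%:R - (l == j)%:R).
Proof. by rewrite /= !coordE !add0r mulrBr -!natrM !mulnb !(andbC (k' == k)). Qed.

Lemma hom_ptsP w : w \in hom_pts R n m <-> exists2 l, label_ok l & w = label_pt l.
Proof.
rewrite /hom_pts inE !mem_cat; split.
  move=> /or4P[/eqP-> | /mapP[i _ ->] | /allpairsP[[i k] [_ _ ->]] | /orP[]].
  - by exists LZero.
  - by exists (LTwo i).
  - by exists (LPlus i k).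
  - by move=> /allpairsP[[i k] [_ _ ->]]; exists (LMinus i k).
  move=> /flatten_mapP[i _ /allpairsP[[j k] [/= + _ ->]]].
  by rewrite mem_filter eq_sym => /andP[ij _]; exists (LCross i j k).
move=> [[|i|i k|i k|i j k] /= ij ->]; rewrite ?eqxx //; apply/orP; right; apply/or4P.
- by apply: Or41; apply: map_f; rewrite mem_enum.
- by apply: Or42; apply/allpairsP; exists (i, k); rewrite !mem_enum.
- by apply: Or43; apply/allpairsP; exists (i, k); rewrite !mem_enum.
apply: Or44; apply/flatten_mapP; exists i; rewrite ?mem_enum //.
by apply/allpairsP; exists (j, k); rewrite /= mem_filter !mem_enum eq_sym ij.
Qed.

Lemma label_mem l : label_ok l -> label_pt l \in hom_pts R n m.
Proof. by move=> ok; apply/hom_ptsP; exists l. Qed.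

Lemma cross_mem i j k : label_pt (LCross i j k) \in hom_pts R n m.
Proof.
have [<- | ij] := eqVneq i j; last exact: label_mem.
have -> : label_pt (LCross i i k) = label_pt (LTwo i).
  by rewrite /= subrr addr0 scaler_nat mulr2n.
exact: label_mem.
Qed.

Definition pairing (a : 'I_n -> R) (b : 'I_n -> 'I_m -> R) (w : CS) : R :=
  \sum_j a j * coord1 j w + \sum_j \sum_k b j k * coord2 j k w.

Lemma pairing_linear a b c x y : pairing a b (c *: x + y) = c * pairing a b x + pairing a b y.
Proof.
have sum_linear (F : 'I_n -> CS -> R) :
    (forall j, F j (c *: x + y) = c * F j x + F j y) ->
    \sum_j F j (c *: x + y) = c * \sum_j F j x + \sum_j F j y.
  by move=> FE; rewrite mulr_sumr -big_split /=; apply: eq_bigr => j _.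
rewrite /pairing (sum_linear (fun j w => a j * coord1 j w)) => [|j]; last first.
  by rewrite coord1D coord1Z mulrDr mulrCA.
rewrite (sum_linear (fun j w => \sum_k b j k * coord2 j k w)) => [|j].
  by rewrite mulrDr addrACA.
rewrite mulr_sumr -big_split; apply: eq_bigr => k _.
by rewrite coord2D coord2Z mulrDr mulrCA.
Qed.

Lemma pairing_e1 a b i : pairing a b (e1 i) = a i.
Proof.
rewrite /pairing [X in _ + X]big1 ?addr0 => [|j _]; last first.
  by rewrite big1 // => k _; rewrite coord2_e1 mulr0.
by under eq_bigr do rewrite coord1_e1; rewrite sum_kron.
Qed.

Lemma pairing_e2 a b i k : pairing a b (e2 i k) = b i k.
Proof.
rewrite /pairing big1 ?add0r => [|j _]; last by rewrite coord1_e2 mulr0.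
under eq_bigr do under eq_bigr do rewrite coord2_e2 -mulnb natrM mulrA.
by under eq_bigr do rewrite sum_kron; rewrite sum_kron.
Qed.

Definition label_eval a b (l : hom_label) : R :=
  match l with
  | LZero => 0
  | LTwo i => 2 * a i
  | LPlus i k => a i + b i k
  | LMinus i k => a i - b i k
  | LCross i j k => (a i + a j) + (b i k - b j k)
  end.

Lemma pairing_label a b l : pairing a b (label_pt l) = label_eval a b l.
Proof.
have lin := pairing_linear a b.
case: l => [|i|i k|i k|i j k] /=;
  by rewrite ?(functional0 lin, functionalD lin, functionalN lin, functionalZ lin,
               pairing_e1, pairing_e2).
Qed.

(* The weights are +-1 on the rows used by [l] and +-2 on its entries; every other admissible
   label then scores at least 1 less than [l]. *)
Definition sep_weight1 (l : hom_label) : 'I_n -> R :=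
  match l with
  | LZero => fun=> -1
  | LTwo i => fun j => (j == i)%:R
  | LPlus i _ | LMinus i _ => fun j => if j == i then 1 else -1
  | LCross i i' _ => fun j => if (j == i) || (j == i') then 1 else -1
  end.

Definition sep_weight2 (l : hom_label) : 'I_n -> 'I_m -> R :=
  match l with
  | LZero | LTwo _ => fun _ _ => 0
  | LPlus i k => fun j k' => if (j == i) && (k' == k) then 2 else 0
  | LMinus i k => fun j k' => if (j == i) && (k' == k) then -2 else 0
  | LCross i i' k => fun j k' =>
      if k' == k then (if j == i then 2 else if j == i' then -2 else 0) else 0
  end.

Lemma label_sep l l' : label_ok l -> label_ok l' ->
  l' = l \/
  label_eval (sep_weight1 l) (sep_weight2 l) l' < label_eval (sep_weight1 l) (sep_weight2 l) l.
Proof.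
case: l => [|i|i k|i k|i j k]; case: l' => [|i'|i' k'|i' k'|i' j' k'] /= ok ok';
  repeat (rewrite ?eqxx /=;
          match goal with |- context [?x == ?y] => case: (eqVneq x y) => ? end; subst);
  rewrite ?eqxx /= in ok ok' *;
  try (match goal with H : is_true (?x != ?x) |- _ => by rewrite eqxx in H end);
  (by left) || (by right; lra).
Qed.

Lemma label_pt_inj l l' : label_pt l = label_pt l' -> label_ok l -> label_ok l' -> l = l'.
Proof.
move=> eq_pt ok ok'; have [// | ] := label_sep ok ok'.
by rewrite -!pairing_label eq_pt ltxx.
Qed.

Lemma hom_pts_vertex w : w \in hom_pts R n m -> is_vertex (hull (hom_pts R n m)) w.
Proof.
move=> /hom_ptsP [l ok ->].
apply: (strict_max_vertex (pairing_linear (sep_weight1 l) (sep_weight2 l))).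
  exact: label_mem.
move=> _ /hom_ptsP [l' ok' ->] ne; rewrite !pairing_label.
by have [eq_l | //] := label_sep ok ok'; rewrite eq_l eqxx in ne.
Qed.

Definition cross_pts : seq CS := flatten [seq [seq label_pt (LCross i j k)
  | j <- [seq j <- enum 'I_n | j != i], k <- enum 'I_m] | i <- enum 'I_n].

Lemma cross_ok i j k : j \in [seq j <- enum 'I_n | j != i] -> label_ok (LCross i j k).
Proof. by rewrite mem_filter eq_sym => /andP[]. Qed.

Lemma cross_pts_uniq : uniq cross_pts.
Proof.
apply: flatten_map_uniq => [|i _|i i' z _ _]; first exact: enum_uniq.
  apply: allpairs_uniq; rewrite ?filter_uniq -?enumT ?enum_uniq // => -[j k] [j' k'].
  move=> /allpairsP[[j1 k1] [/= /cross_ok ok _ [-> ->]]].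
  move=> /allpairsP[[j2 k2] [/= /cross_ok ok' _ [-> ->]]].
  by move=> /(@label_pt_inj (LCross i j1 k1) (LCross i j2 k2))/(_ (ok k1) (ok' k2)) [-> ->].
move=> /allpairsP[[j k] [/= /cross_ok ok _ ->]] /allpairsP[[j' k'] [/= /cross_ok ok' _]].
by move=> /(@label_pt_inj (LCross i j k) (LCross i' j' k'))/(_ (ok k) (ok' k')) [].
Qed.

Lemma uniq_hom_pts : uniq (hom_pts R n m).
Proof.
change (uniq (label_pt LZero :: [seq label_pt (LTwo i) | i <- enum 'I_n]
  ++ [seq label_pt (LPlus i k) | i <- enum 'I_n, k <- enum 'I_m]
  ++ [seq label_pt (LMinus i k) | i <- enum 'I_n, k <- enum 'I_m] ++ cross_pts)).
rewrite cons_uniq !cat_uniq !mem_cat cross_pts_uniq andbT.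
apply/and5P; split; last (apply/and3P; split).
- by apply/or4P => -[/mapP[i _ /label_pt_inj/(_ isT isT)] |
    /allpairsP[[i k] [_ _ /label_pt_inj/(_ isT isT)]] |
    /allpairsP[[i k] [_ _ /label_pt_inj/(_ isT isT)]] |
    /flatten_mapP[i _ /allpairsP[[j k] [/cross_ok ok _ /label_pt_inj/(_ isT (ok _))]]]].
- by rewrite map_inj_uniq -?enumT ?enum_uniq // => i i' /label_pt_inj/(_ isT isT) [].
- apply/hasPn => z; rewrite !mem_cat => /or3P[
    /allpairsP[[i k] [_ _ ->]] | /allpairsP[[i k] [_ _ ->]] |
    /flatten_mapP[i _ /allpairsP[[j k] [/cross_ok ok _ ->]]]];
    apply/mapP => -[i' _ /label_pt_inj];
    [by move/(_ isT isT) | by move/(_ isT isT) | by move/(_ (ok _) isT)].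
- apply: allpairs_uniq; rewrite -?enumT ?enum_uniq // => -[i k] [i' k'] _ _.
  by move=> /label_pt_inj/(_ isT isT) [-> ->].
- apply/hasPn => z; rewrite mem_cat => /orP[/allpairsP[[i k] [_ _ ->]] |
    /flatten_mapP[i _ /allpairsP[[j k] [/cross_ok ok _ ->]]]];
    apply/allpairsP => -[[i' k'] [_ _ /label_pt_inj]];
    [by move/(_ isT isT) | by move/(_ (ok _) isT)].
- apply: allpairs_uniq; rewrite -?enumT ?enum_uniq // => -[i k] [i' k'] _ _.
  by move=> /label_pt_inj/(_ isT isT) [-> ->].
apply/hasPn => _ /flatten_mapP[i _ /allpairsP[[j k] [/cross_ok ok _ ->]]].
by apply/allpairsP => -[[i' k'] [_ _ /label_pt_inj]]; move/(_ (ok _) isT).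
Qed.

Lemma size_hom_pts : size (hom_pts R n m) = ((n + 1) * (m * n + 1))%N.
Proof.
have others (i : 'I_n) : size [seq j <- enum 'I_n | j != i] = n.-1.
  rewrite size_filter -[in RHS](size_enum_ord n) -(count_predC (pred1 i)).
  by rewrite count_uniq_mem ?enum_uniq // mem_enum add1n.
rewrite /= !size_cat size_map !size_allpairs size_flatten /shape -map_comp.
rewrite (eq_map (g := fun=> (n.-1 * m)%N)) => [|i]; last first.
  by rewrite /= size_allpairs others size_enum_ord.
have /all_pred1P -> : all (pred1 (n.-1 * m)%N) [seq n.-1 * m | _ <- enum 'I_n]%N.
  by apply/allP => _ /mapP[? _ ->] /=.
by rewrite sumn_nseq !size_map -!enumT !size_enum_ord; case: n => [|k] /=; nia.
Qed.

End Labels.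

Section PosNegParts.
Variable R : realFieldType.
Implicit Types a b : R.

Definition pos_part a := Num.max a 0.
Definition neg_part a := Num.max (- a) 0.

Lemma pos_part_ge0 a : 0 <= pos_part a. Proof. by rewrite le_max lexx orbT. Qed.
Lemma neg_part_ge0 a : 0 <= neg_part a. Proof. by rewrite le_max lexx orbT. Qed.

Lemma pos_sub_neg_part a : pos_part a - neg_part a = a.
Proof. by rewrite /pos_part /neg_part !maxr_absE !subr0 normrN; lra. Qed.

Lemma pos_add_neg_part a : pos_part a + neg_part a = `|a|.
Proof. by rewrite /pos_part /neg_part !maxr_absE !subr0 normrN; lra. Qed.

Lemma divr_le1 a b : 0 <= a -> a <= b -> a / b <= 1.
Proof.
move=> a0 ab; have [-> | b0] := eqVneq b 0; first by rewrite invr0 mulr0.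
by rewrite ler_pdivrMr ?mul1r // lt_neqAle eq_sym b0 (le_trans a0 ab).
Qed.

Lemma max_sub_prod a b : 0 <= a -> 0 <= b -> a + b - a * b / Num.max a b = Num.max a b.
Proof.
move=> a0 b0; case: leP => ab.
  have [b_eq0 | b_neq0] := eqVneq b 0; first by subst b; rewrite invr0 !mulr0; lra.
  by rewrite -mulrA divff // mulr1; lra.
by rewrite mulrAC divff ?gt_eqF ?(le_lt_trans b0) // mul1r; lra.
Qed.

End PosNegParts.

Section HullInequalities.
Variables (R : realType) (n m : nat).
Local Notation CS := (coordspace R n m).
Local Notation coord1 := (@coord1 R n m).
Local Notation coord2 := (@coord2 R n m).

(* The inequality description of [hull (hom_pts R n m)], homogenized by the total weight [mu]
   so that it is stable under nonnegative combinations. *)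
Definition hom_ineq (w : CS) (mu : R) :=
  (forall j, \sum_k `|coord2 j k w| <= coord1 j w) /\
  \sum_j coord1 j w + \sum_k `|\sum_j coord2 j k w| <= 2 * mu.

Lemma hom_ineqD x y a b : hom_ineq x a -> hom_ineq y b -> hom_ineq (x + y) (a + b).
Proof.
move=> [rowx totx] [rowy toty]; split=> [j|].
  rewrite coord1D; apply: le_trans (lerD (rowx j) (rowy j)).
  by rewrite -big_split /=; apply: ler_sum => k _; rewrite coord2D ler_normD.
have colD : \sum_k `|\sum_j coord2 j k (x + y)| <=
    \sum_k `|\sum_j coord2 j k x| + \sum_k `|\sum_j coord2 j k y|.
  rewrite -big_split; apply: ler_sum => k _.
  by under eq_bigr do rewrite coord2D; rewrite big_split ler_normD.
under eq_bigr do rewrite coord1D; rewrite big_split /=; lra.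
Qed.

Lemma hom_ineqZ x a c : 0 <= c -> hom_ineq x a -> hom_ineq (c *: x) (c * a).
Proof.
move=> c0 [row tot]; split=> [j|].
  under eq_bigr do rewrite coord2Z normrM ger0_norm //.
  by rewrite -mulr_sumr coord1Z ler_wpM2l.
under eq_bigr do rewrite coord1Z.
under [X in _ + X <= _]eq_bigr do (under eq_bigr do rewrite coord2Z;
  rewrite -mulr_sumr normrM ger0_norm //).
by rewrite -!mulr_sumr -mulrDr mulrCA ler_wpM2l.
Qed.

(* Covers every listed point: its second block is [s k * d j], [s] indicating at most one column. *)
Lemma hom_ineq_rank1 (w : CS) (c d : 'I_n -> R) (s : 'I_m -> R) :
  (forall j, coord1 j w = c j) -> (forall j k, coord2 j k w = s k * d j) ->
  \sum_k `|s k| <= 1 -> (forall j, `|d j| <= c j) -> \sum_j c j + `|\sum_j d j| <= 2 ->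
  hom_ineq w 1.
Proof.
move=> E1 E2 s1 dc cd; split=> [j|].
  under eq_bigr do rewrite E2 normrM.
  by rewrite -mulr_suml E1; apply: le_trans (dc j); rewrite ler_piMl.
under eq_bigr do rewrite E1.
under [X in _ + X <= _]eq_bigr do (under eq_bigr do rewrite E2;
  rewrite -mulr_sumr normrM).
by rewrite -mulr_suml mulr1; apply: le_trans cd; rewrite lerD2l ler_piMl.
Qed.

Lemma hom_ineq_pts w : w \in hom_pts R n m -> hom_ineq w 1.
Proof.
have delta_le (b b' : bool) : `|b%:R - b'%:R| <= b%:R + b'%:R :> R.
  by case: b; case: b'; rewrite /= ?mulr1n ?mulr0n ?subrr ?subr0 ?sub0r ?normrN ?normr0 ?normr1
    ?addr0 ?add0r //; lra.
move=> /hom_ptsP[l ok ->]; case: l ok => [|i|i k|i k|i j k] ok.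
- apply: (@hom_ineq_rank1 _ (fun=> 0) (fun=> 0) (fun=> 0)) => [j|j k|||];
    by rewrite ?coord10 ?coord20 ?mulr0 ?big1 ?normr0 ?addr0 ?ler01 ?ler0n.
- apply: (@hom_ineq_rank1 _ (fun j => 2 * (j == i)%:R) (fun=> 0) (fun=> 0)) => [j|j k|||].
  + exact: coord1_two.
  + by rewrite coord2_two mulr0.
  + by rewrite big1 ?normr0 ?ler01.
  + by move=> j; rewrite normr0 mulr_ge0.
  + by rewrite -mulr_sumr sum_delta big1 ?normr0 ?addr0 ?mulr1.
- apply: (@hom_ineq_rank1 _ (fun j => (j == i)%:R) (fun j => (j == i)%:R)
    (fun k' => (k' == k)%:R)) => [j|j k'|||]; rewrite ?coord1_plus ?coord2_plus //.
  + by under eq_bigr do rewrite normr_nat; rewrite sum_delta.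
  + by move=> j; rewrite normr_nat.
  + by rewrite sum_delta normr1.
- apply: (@hom_ineq_rank1 _ (fun j => (j == i)%:R) (fun j => - (j == i)%:R)
    (fun k' => (k' == k)%:R)) => [j|j k'|||]; rewrite ?coord1_minus ?coord2_minus ?mulrN //.
  + by under eq_bigr do rewrite normr_nat; rewrite sum_delta.
  + by move=> j; rewrite normrN normr_nat.
  + by rewrite sumrN sum_delta normrN normr1.
apply: (@hom_ineq_rank1 _ (fun l => (l == i)%:R + (l == j)%:R)
  (fun l => (l == i)%:R - (l == j)%:R) (fun k' => (k' == k)%:R)) => [l|l k'|||];
  rewrite ?coord1_cross ?coord2_cross //.
- by under eq_bigr do rewrite normr_nat; rewrite sum_delta.
- by rewrite big_split sumrB /= !sum_delta subrr normr0 addr0.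
Qed.

Lemma hom_ineq0 : hom_ineq 0 0.
Proof.
have := hom_ineqZ (lexx 0) (hom_ineq_pts (_ : 0 \in hom_pts R n m)).
by rewrite scale0r mul0r; apply; rewrite inE eqxx.
Qed.

Lemma hull_hom_ineq w : hull (hom_pts R n m) w -> hom_ineq w 1.
Proof.
move=> [c [c0 [<- ->]]]; apply: (big_ind2 hom_ineq); first exact: hom_ineq0.
  by move=> *; apply: hom_ineqD.
move=> i _; rewrite -[X in hom_ineq _ X]mulr1.
exact/(hom_ineqZ (c0 i))/hom_ineq_pts/mem_nth.
Qed.

End HullInequalities.

Section Decomposition.
Variables (R : realType) (n m : nat) (x : coordspace R n m).
Hypothesis x_ineq : hom_ineq x 1.
Local Notation CS := (coordspace R n m).
Local Notation c j := (coord1 j x).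
Local Notation d j k := (coord2 j k x).

Definition col_pos k := \sum_j pos_part (d j k).
Definition col_neg k := \sum_j neg_part (d j k).
Definition col_max k := Num.max (col_pos k) (col_neg k).

(* A zero column has [col_max k = 0]; then [_ / 0 = 0] makes all its weights vanish. *)
Definition w_cross i j k := pos_part (d i k) * neg_part (d j k) / col_max k.
Definition w_plus i k := pos_part (d i k) * (1 - col_neg k / col_max k).
Definition w_minus i k := neg_part (d i k) * (1 - col_pos k / col_max k).
Definition w_two i := (c i - \sum_k `|d i k|) / 2.

Definition column_part k : CS :=
  \sum_i \sum_j w_cross i j k *: label_pt R (LCross i j k)
  + \sum_i w_plus i k *: label_pt R (LPlus i k) + \sum_i w_minus i k *: label_pt R (LMinus i k).

Definition decomp : CS := \sum_k column_part k + \sum_i w_two i *: label_pt R (LTwo m i).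

Lemma sum_w_cross_row l k : \sum_j w_cross l j k = pos_part (d l k) * col_neg k / col_max k.
Proof. by rewrite -mulr_suml -mulr_sumr. Qed.

Lemma sum_w_cross_col l k : \sum_i w_cross i l k = col_pos k * neg_part (d l k) / col_max k.
Proof. by rewrite -mulr_suml -mulr_suml. Qed.

Lemma coord1_column l k : coord1 l (column_part k) =
  (\sum_j w_cross l j k + \sum_i w_cross i l k) + w_plus l k + w_minus l k.
Proof.
rewrite !coord1D !coord1_sum; congr (_ + _ + _).
- under eq_bigr do (rewrite coord1_sum; under eq_bigr do rewrite coord1Z coord1_cross).
  exact: sum2_kron_add.
- by under eq_bigr do rewrite coord1Z coord1_plus; rewrite sum_kron_sym.
- by under eq_bigr do rewrite coord1Z coord1_minus; rewrite sum_kron_sym.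
Qed.

Lemma coord2_column l k' k : coord2 l k' (column_part k) =
  (k' == k)%:R * ((\sum_j w_cross l j k - \sum_i w_cross i l k) + w_plus l k - w_minus l k).
Proof.
rewrite !coord2D !coord2_sum mulrBr mulrDr; congr (_ + _ + _).
- under eq_bigr do (rewrite coord2_sum; under eq_bigr do rewrite coord2Z coord2_cross mulrCA).
  by under eq_bigr do rewrite -mulr_sumr; rewrite -mulr_sumr sum2_kron_sub.
- by under eq_bigr do rewrite coord2Z coord2_plus mulrCA; rewrite -mulr_sumr sum_kron_sym.
- under eq_bigr do rewrite coord2Z coord2_minus mulrN mulrCA.
  by rewrite sumrN -mulr_sumr sum_kron_sym.
Qed.

Lemma coord1_decomp l : coord1 l decomp = c l.
Proof.
rewrite /decomp coord1D !coord1_sum.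
under eq_bigr do rewrite coord1_column sum_w_cross_row sum_w_cross_col.
under [X in _ + X]eq_bigr do rewrite coord1Z coord1_two mulrCA.
rewrite -mulr_sumr sum_kron_sym (eq_bigr (fun k => `|d l k|)) => [|k _]; last first.
  by rewrite /w_plus /w_minus -pos_add_neg_part; ring.
by rewrite /w_two; lra.
Qed.

Lemma coord2_decomp l k : coord2 l k decomp = d l k.
Proof.
rewrite /decomp coord2D !coord2_sum [X in _ + X]big1 ?addr0 => [|i _]; last first.
  by rewrite coord2Z coord2_two mulr0.
under eq_bigr do rewrite coord2_column mulrC sum_w_cross_row sum_w_cross_col.
by rewrite sum_kron_sym /w_plus /w_minus -[RHS]pos_sub_neg_part; ring.
Qed.

Lemma decompE : x = decomp.
Proof. by apply: coordP => [j | j k]; rewrite ?coord1_decomp ?coord2_decomp. Qed.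

Lemma col_pos_ge0 k : 0 <= col_pos k.
Proof. by apply: sumr_ge0 => j _; apply: pos_part_ge0. Qed.

Lemma col_neg_ge0 k : 0 <= col_neg k.
Proof. by apply: sumr_ge0 => j _; apply: neg_part_ge0. Qed.

Lemma col_max_inv_ge0 k : 0 <= (col_max k)^-1.
Proof. by rewrite invr_ge0 le_max col_pos_ge0. Qed.

Lemma w_cross_ge0 i j k : 0 <= w_cross i j k.
Proof. by rewrite !mulr_ge0 ?pos_part_ge0 ?neg_part_ge0 ?col_max_inv_ge0. Qed.

Lemma w_plus_ge0 i k : 0 <= w_plus i k.
Proof. by rewrite mulr_ge0 ?pos_part_ge0 // subr_ge0 divr_le1 ?col_neg_ge0 // le_max lexx orbT. Qed.

Lemma w_minus_ge0 i k : 0 <= w_minus i k.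
Proof. by rewrite mulr_ge0 ?neg_part_ge0 // subr_ge0 divr_le1 ?col_pos_ge0 // le_max lexx. Qed.

Lemma w_two_ge0 i : 0 <= w_two i.
Proof. by rewrite divr_ge0 // subr_ge0; case: x_ineq. Qed.

Lemma column_mass k :
  \sum_i \sum_j w_cross i j k + \sum_i w_plus i k + \sum_i w_minus i k = col_max k.
Proof.
rewrite /col_max -[RHS]max_sub_prod ?col_pos_ge0 ?col_neg_ge0 // -/(col_max k).
under eq_bigr do rewrite sum_w_cross_row.
by rewrite /w_plus /w_minus -!mulr_suml /col_pos /col_neg; ring.
Qed.

Lemma col_max_mean k : col_max k = (col_pos k + col_neg k) / 2 + `|\sum_j d j k| / 2.
Proof.
have -> : \sum_j d j k = col_pos k - col_neg k.
  by rewrite /col_pos /col_neg -sumrB; apply: eq_bigr => j _; rewrite pos_sub_neg_part.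
by rewrite /col_max maxr_absE mulrDl.
Qed.

Lemma decomp_cone : cone_comb (hom_pts R n m) decomp (\sum_k col_max k + \sum_i w_two i).
Proof.
apply: cone_combD; last first.
  by apply: cone_comb_sum => i _; apply: cone_comb_mem (w_two_ge0 i); apply: label_mem.
apply: cone_comb_sum => k _; rewrite -column_mass; apply: cone_combD; first apply: cone_combD.
- apply: cone_comb_sum => i _; apply: cone_comb_sum => j _.
  apply: cone_comb_mem; [exact: cross_mem | exact: w_cross_ge0].
- by apply: cone_comb_sum => i _; apply: cone_comb_mem (w_plus_ge0 _ _); apply: label_mem.
- by apply: cone_comb_sum => i _; apply: cone_comb_mem (w_minus_ge0 _ _); apply: label_mem.
Qed.

Lemma decomp_mass_le1 : \sum_k col_max k + \sum_i w_two i <= 1.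
Proof.
have abs_sum : \sum_k (col_pos k + col_neg k) = \sum_j \sum_k `|d j k|.
  rewrite exchange_big; apply: eq_bigr => k _.
  by rewrite -big_split /=; apply: eq_bigr => j _; rewrite pos_add_neg_part.
under eq_bigr do rewrite col_max_mean.
rewrite big_split /= -!mulr_suml abs_sum sumrB.
by case: x_ineq => _; lra.
Qed.

End Decomposition.

Lemma hom_ineq_hull (R : realType) (n m : nat) (x : coordspace R n m) :
  hom_ineq x 1 -> hull (hom_pts R n m) x.
Proof.
move=> x_ineq; rewrite (decompE x).
by apply: hull_cone_comb (decomp_mass_le1 x_ineq) (decomp_cone x_ineq); rewrite inE eqxx.
Qed.

Section CubeSimplex.
Variables (R : realType) (m n : nat).

Lemma simplexP (y : 'cV[R]_n) :
  simplex y <-> (forall i, 0 <= y i 0) /\ \sum_i y i 0 <= 1.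
Proof.
have pts v : v \in simplex_pts R n -> (forall i, 0 <= v i 0) /\ \sum_i v i 0 <= 1.
  rewrite inE => /orP[/eqP-> | /mapP[i _ ->]].
    by split=> [i|]; rewrite ?mxE // big1 // => i _; rewrite mxE.
  split=> [j|]; first by rewrite mxE.
  by rewrite (bigD1 i) //= mxE !eqxx big1 ?addr0 // => j /negbTE nj; rewrite mxE nj.
split=> [[w [w0 [ws ->]]] | [y0 y1]].
  have ptsE p := pts _ (mem_nth 0 (ltn_ord p)); split=> [i|].
    by rewrite summxE sumr_ge0 // => p _; rewrite mxE mulr_ge0 // (ptsE p).1.
  under eq_bigr do rewrite summxE.
  rewrite exchange_big /= -ws; apply: ler_sum => p _.
  under eq_bigr do rewrite mxE.
  by rewrite -mulr_sumr ler_piMr // (ptsE p).2.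
apply: hull_cone_comb y1 _; first by rewrite inE eqxx.
have yE : y = \sum_i y i 0 *: delta_mx i 0.
  by rewrite {1}(matrix_sum_delta y); apply: eq_bigr => i _; rewrite big_ord1.
rewrite [X in cone_comb _ X]yE; apply: cone_comb_sum => i _; apply: cone_comb_mem (y0 i).
by rewrite inE; apply/orP; right; apply: map_f; rewrite mem_enum.
Qed.

Lemma cube_norm_le1 (x : 'cV[R]_m) : cube x -> forall k, `|x k 0| <= 1.
Proof.
move=> [w [w0 [ws ->]]] k; rewrite summxE -ws.
apply: le_trans (ler_norm_sum _ _ _) _; apply: ler_sum => p _.
have /mapP[f _ ->] := mem_nth 0 (ltn_ord p).
by rewrite !mxE normrM ger0_norm //; case: (f k); rewrite ?normrN normr1 mulr1.
Qed.

Lemma cube_sign (s : 'I_m -> bool) : cube (\col_k (if s k then 1 else -1) : 'cV[R]_m).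
Proof.
apply: hull_mem; apply/mapP; exists [ffun k => s k]; first by rewrite mem_enum.
by apply/matrixP => k c; rewrite !mxE ffunE.
Qed.

Definition hom_cond (f : affmap R m n) :=
  (forall j, \sum_k `|f.2 j k| <= f.1 j 0) /\
  \sum_j f.1 j 0 + \sum_k `|\sum_j f.2 j k| <= 1.

Lemma aff_evalE (f : affmap R m n) x j : aff_eval f x j 0 = f.1 j 0 + \sum_k f.2 j k * x k 0.
Proof. by rewrite !mxE. Qed.

(* Only two sign vectors of the cube are needed: one minimizing the [j]-th coordinate of [f x],
   one maximizing the sum of all coordinates. *)
Lemma HomBS_cond f : HomBS f -> hom_cond f.
Proof.
move=> hom; split=> [j|].
  have /simplexP[/(_ j) coord_ge0 _] := hom _ (cube_sign (fun k => f.2 j k < 0)).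
  move: coord_ge0; rewrite aff_evalE (eq_bigr (fun k => - `|f.2 j k|)) ?sumrN ?subr_ge0 // => k _.
  rewrite mxE; case: ltrP => h; first by rewrite mulr1 ltr0_norm ?opprK.
  by rewrite mulrN1 ger0_norm.
move: (hom _ (cube_sign (fun k => 0 <= \sum_j f.2 j k))) => /simplexP[_].
under eq_bigr do rewrite aff_evalE; rewrite big_split /= exchange_big /=.
rewrite (eq_bigr (fun k => `|\sum_j f.2 j k|)) // => k _.
rewrite mxE -mulr_suml; case: leP => h; first by rewrite mulr1 ger0_norm.
by rewrite mulrN1 ltr0_norm.
Qed.

Lemma cond_HomBS f : hom_cond f -> HomBS f.
Proof.
move=> [row tot] x /cube_norm_le1 x1; apply/simplexP; split=> [j|].
  have : - \sum_k `|f.2 j k| <= \sum_k f.2 j k * x k 0.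
    rewrite -sumrN; apply: ler_sum => k _; rewrite lerNl.
    by apply: le_trans (ler_norm _) _; rewrite normrN normrM ler_piMr.
  by rewrite aff_evalE; have := row j; lra.
apply: le_trans tot; under eq_bigr do rewrite aff_evalE.
rewrite big_split /= exchange_big /= lerD2l; apply: ler_sum => k _.
by rewrite -mulr_suml; apply: le_trans (ler_norm _) _; rewrite normrM ler_piMr.
Qed.

Lemma HomBSP f : HomBS f <-> hom_cond f.
Proof. by split; [apply: HomBS_cond | apply: cond_HomBS]. Qed.

End CubeSimplex.

Section Coordinatization.
Variables (R : realType) (m n : nat).
Local Notation CS := (coordspace R n m).
Local Notation AM := (affmap R m n).

(* The factor 2 makes the vertices the integral points listed in [hom_pts]. *)
Definition hom_coord (f : AM) : CS := 2%:R *: col_mx f.1 (mxvec f.2)^T.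
Definition coord_hom (w : CS) : AM :=
  (2^-1 *: \col_j coord1 j w, 2^-1 *: \matrix_(j, k) coord2 j k w).

Lemma coord1_hom_coord f j : coord1 j (hom_coord f) = 2 * f.1 j 0.
Proof. by rewrite /coord1 mxE col_mxEu. Qed.

Lemma coord2_hom_coord f j k : coord2 j k (hom_coord f) = 2 * f.2 j k.
Proof. by rewrite /coord2 mxE col_mxEd mxE mxvecE. Qed.

Lemma hom_coordK : cancel hom_coord coord_hom.
Proof.
move=> [b A]; congr pair; apply/matrixP => j k; rewrite !mxE.
  by rewrite (ord1 k) coord1_hom_coord mulKf ?pnatr_eq0.
by rewrite coord2_hom_coord mulKf ?pnatr_eq0.
Qed.

Lemma coord_homK : cancel coord_hom hom_coord.
Proof.
move=> w; apply: coordP => [j | j k];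
  by rewrite ?coord1_hom_coord ?coord2_hom_coord !mxE mulVKf ?pnatr_eq0.
Qed.

Lemma hom_coord_affine : affine_map hom_coord.
Proof.
move=> f g t; apply: coordP => [j | j k].
  rewrite coord1_hom_coord coord1D coord1Z coord1_hom_coord coord1Z coord1_hom_coord.
  by rewrite !mxE; ring.
rewrite coord2_hom_coord coord2D coord2Z coord2_hom_coord coord2Z coord2_hom_coord.
by rewrite !mxE; ring.
Qed.

Lemma hom_ineq_hom_coord f : hom_ineq (hom_coord f) 1 <-> hom_cond f.
Proof.
have row j : \sum_k `|coord2 j k (hom_coord f)| = 2 * \sum_k `|f.2 j k|.
  by rewrite mulr_sumr; apply: eq_bigr => k _; rewrite coord2_hom_coord normrM ger0_norm.
have col : \sum_k `|\sum_j coord2 j k (hom_coord f)| = 2 * \sum_k `|\sum_j f.2 j k|.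
  rewrite mulr_sumr; apply: eq_bigr => k _.
  by under eq_bigr do rewrite coord2_hom_coord; rewrite -mulr_sumr normrM ger0_norm.
have tot : \sum_j coord1 j (hom_coord f) = 2 * \sum_j f.1 j 0.
  by rewrite mulr_sumr; apply: eq_bigr => j _; rewrite coord1_hom_coord.
rewrite /hom_ineq /hom_cond col tot; split=> -[rowP totP]; split; try lra.
  by move=> j; have := rowP j; rewrite row coord1_hom_coord; lra.
by move=> j; rewrite row coord1_hom_coord; have := rowP j; lra.
Qed.

Lemma hull_hom_ptsE w : hull (hom_pts R n m) w <-> exists f, HomBS f /\ hom_coord f = w.
Proof.
split=> [/hull_hom_ineq w_ineq | [f [/HomBSP f_cond <-]]].
  exists (coord_hom w); rewrite coord_homK; split=> //.
  by apply/HomBSP/hom_ineq_hom_coord; rewrite coord_homK.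
exact/hom_ineq_hull/hom_ineq_hom_coord.
Qed.

End Coordinatization.

Theorem corollary4p2 (R : realType) (m n : nat) :
  (exists s : seq (affmap R m n),
     uniq s /\ size s = ((n + 1) * (m * n + 1))%N /\
     (forall f, is_vertex (@HomBS R m n) f <-> f \in s))
  /\ (exists phi : affmap R m n -> coordspace R n m,
        affine_map phi /\ bijective phi /\
        (forall w, hull (@hom_pts R n m) w <-> exists f, @HomBS R m n f /\ phi f = w))
  /\ (forall w, is_vertex (hull (@hom_pts R n m)) w <-> w \in @hom_pts R n m).
Proof.
have phi_affine := @hom_coord_affine R m n.
have phiK := @hom_coordK R m n; have psiK := @coord_homK R m n.
have hullE := @hull_hom_ptsE R m n.
have vertexP w : is_vertex (hull (hom_pts R n m)) w <-> w \in hom_pts R n m.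
  by split; [apply: hull_vertex_mem | apply: hom_pts_vertex].
have HomBS_vertexP f : is_vertex (@HomBS R m n) f <-> hom_coord f \in hom_pts R n m.
  by rewrite -vertexP (affine_image_vertex phi_affine phiK psiK hullE).
split; last split; last exact: vertexP.
  exists (map (@coord_hom R m n) (hom_pts R n m)); split.
    by rewrite (map_inj_uniq (can_inj psiK)) uniq_hom_pts.
  split=> [|f]; first by rewrite size_map size_hom_pts.
  by rewrite HomBS_vertexP -{2}(phiK f) (mem_map (can_inj psiK)).
exists (@hom_coord R m n); split=> //; split=> //.
by exists (@coord_hom R m n).
Qed.
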